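(* Let $B=\mathbf I\boxtimes\mathrm{Dec}_\bot\mathbf C$, so $B_{i,j}$ is the groupoid of pairs $(a:S\to\underline i,\ b:P\to\underline{j+1})$ of a layered finite set and a layered finite poset. Then $B$ has an augmented abacus map whose components $f_{i,j}:B_{i+1,j}\to B_{i,j+1}$ ($i,j\ge0$) move the last layer of the set into a new first layer of the poset: $f_{i,j}(a:S\to\underline{i+1},\ b:P\to\underline{j+1})=\big(a|:a^{-1}(\underline i)\to\underline i,\ b':a^{-1}(i+1)\sqcup P\to\underline{j+2}\big)$, where $a^{-1}(i+1)$ is discretely ordered and incomparable with $P$, $b'$ sends $a^{-1}(i+1)$ to $1$ and $x\in P$ to $b(x)+1$.
   Context: For $n\ge0$, $\underline n=\{1,\dots,n\}$. $\mathbf C_n$ is the groupoid of $n$-layered finite posets (monotone maps $P\to\underline n$, morphisms poset isomorphisms over $\underline n$), $\mathbf I_n$ the groupoid of $n$-layered finite sets (maps $S\to\underline n$); both are simplicial groupoids with inner face maps joining adjacent layers, $d_0$/$d_n$ deleting the first/last layer, degeneracies inserting empty layers; they are decomposition spaces. $\mathrm{Dec}_\bot Z$ has $(\mathrm{Dec}_\bot Z)_n=Z_{n+1}$ with maps $d_{k+1},s_{k+1}$. The box product $B=X\boxtimes\mathrm{Dec}_\bot Y$ ($X=\mathbf I$, $Y=\mathbf C$) has $B_{i,j}=X_i\times Y_{j+1}$, horizontal maps $d_k=\mathrm{id}\times d_{k+1}$, $s_k=\mathrm{id}\times s_{k+1}$, vertical maps $e_k\times\mathrm{id}$, $t_k\times\mathrm{id}$,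 augmentations $B_{i,-1}=X_i\times Y_0$, $B_{-1,j}=X_0\times Y_j$, $u=\mathrm{id}\times d_1$, $v=\mathrm{id}\times d_0$. An abacus map is a family $f_{i,j}:B_{i+1,j}\to B_{i,j+1}$ such that each $f_{i,\bullet}:B_{i+1,\bullet}\to\mathrm{Dec}_\bot(B_{i,\bullet})$ is simplicial, each $f_{\bullet,j}:\mathrm{Dec}_\top(B_{\bullet,j})\to B_{\bullet,j+1}$ commutes with all structure maps except top face maps ($\mathrm{Dec}_\top$ shifts down by one and deletes the last face/degeneracy maps), and $d_0f_{i,j}t_i=\mathrm{id}$ ($t_i$ the top vertical degeneracy). It is augmented if there exist maps $f_{i,-1}:B_{i+1,-1}\to B_{i,0}$ with $f_{i,-1}u=d_1f_{i,0}$ and $uf_{i,-1}=e_{i+1}$, and maps $f_{-1,j}:B_{0,j}\to B_{-1,j+1}$ with $f_{-1,j}e_0=vf_{0,j}$ and $d_0f_{-1,j}=v$. *)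

From HB Require Import structures.
From mathcomp Require Import all_boot zify.
Set Implicit Arguments. Unset Strict Implicit. Unset Printing Implicit Defensive.

(* Layers of an n-layered object: 'I_n, i.e. 0-based (layer k+1 of the paper
   is the ordinal k). *)

Record lset (n : nat) := LSet { ls_car : finType; ls_lay : ls_car -> 'I_n }.

Record lposet (n : nat) := LPoset {
  lp_car : finType;
  lp_le : rel lp_car;
  lp_refl : reflexive lp_le;
  lp_anti : antisymmetric lp_le;
  lp_trans : transitive lp_le;
  lp_lay : lp_car -> 'I_n;
  lp_mono : forall x y, lp_le x y -> lp_lay x <= lp_lay y }.
Arguments ls_lay {n} l _.
Arguments lp_le {n} l _ _.
Arguments lp_lay {n} l _.

Record lsiso n (A B : lset n) := LSIso {
  si_f : ls_car A -> ls_car B;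
  si_g : ls_car B -> ls_car A;
  si_fK : cancel si_f si_g;
  si_gK : cancel si_g si_f;
  si_lay : forall x, ls_lay B (si_f x) = ls_lay A x }.

Record lpiso n (P Q : lposet n) := LPIso {
  pi_f : lp_car P -> lp_car Q;
  pi_g : lp_car Q -> lp_car P;
  pi_fK : cancel pi_f pi_g;
  pi_gK : cancel pi_g pi_f;
  pi_le : forall x y, lp_le Q (pi_f x) (pi_f y) = lp_le P x y;
  pi_lay : forall x, lp_lay Q (pi_f x) = lp_lay P x }.

Definition lsid n (A : lset n) : lsiso A A :=
  @LSIso n A A id id (fun _ => erefl) (fun _ => erefl) (fun _ => erefl).
Definition lpid n (P : lposet n) : lpiso P P :=
  @LPIso n P P id id (fun _ => erefl) (fun _ => erefl) (fun _ _ => erefl)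
    (fun _ => erefl).

Section Comp.
Variable n : nat.
Lemma lscomp_fK (A B C : lset n) (g : lsiso B C) (h : lsiso A B) :
  cancel (si_f g \o si_f h) (si_g h \o si_g g).
Proof. by move=> x /=; rewrite !si_fK. Qed.
Lemma lscomp_gK (A B C : lset n) (g : lsiso B C) (h : lsiso A B) :
  cancel (si_g h \o si_g g) (si_f g \o si_f h).
Proof. by move=> x /=; rewrite !si_gK. Qed.
Lemma lscomp_lay (A B C : lset n) (g : lsiso B C) (h : lsiso A B) x :
  ls_lay C ((si_f g \o si_f h) x) = ls_lay A x.
Proof. by rewrite /= !si_lay. Qed.
Definition lscomp (A B C : lset n) (g : lsiso B C) (h : lsiso A B) : lsiso A C :=
  LSIso (lscomp_fK g h) (lscomp_gK g h) (lscomp_lay g h).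

Lemma lpcomp_fK (P Q R : lposet n) (g : lpiso Q R) (h : lpiso P Q) :
  cancel (pi_f g \o pi_f h) (pi_g h \o pi_g g).
Proof. by move=> x /=; rewrite !pi_fK. Qed.
Lemma lpcomp_gK (P Q R : lposet n) (g : lpiso Q R) (h : lpiso P Q) :
  cancel (pi_g h \o pi_g g) (pi_f g \o pi_f h).
Proof. by move=> x /=; rewrite !pi_gK. Qed.
Lemma lpcomp_le (P Q R : lposet n) (g : lpiso Q R) (h : lpiso P Q) x y :
  lp_le R ((pi_f g \o pi_f h) x) ((pi_f g \o pi_f h) y) = lp_le P x y.
Proof. by rewrite /= !pi_le. Qed.
Lemma lpcomp_lay (P Q R : lposet n) (g : lpiso Q R) (h : lpiso P Q) x :
  lp_lay R ((pi_f g \o pi_f h) x) = lp_lay P x.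
Proof. by rewrite /= !pi_lay. Qed.
Definition lpcomp (P Q R : lposet n) (g : lpiso Q R) (h : lpiso P Q) : lpiso P R :=
  LPIso (lpcomp_fK g h) (lpcomp_gK g h) (lpcomp_le g h) (lpcomp_lay g h).
End Comp.

Record sfun n m := SFun {
  sf_ob : lset n -> lset m;
  sf_hom : forall A B, lsiso A B -> lsiso (sf_ob A) (sf_ob B) }.
Record pfun n m := PFun {
  pf_ob : lposet n -> lposet m;
  pf_hom : forall P Q, lpiso P Q -> lpiso (pf_ob P) (pf_ob Q) }.

Definition idS n : sfun n n := @SFun n n id (fun _ _ h => h).
Definition idP n : pfun n n := @PFun n n id (fun _ _ h => h).

(* Relayering along a map of layers g : 'I_n -> 'I_m (joining layers,
   inserting empty layers). *)
Definition ls_relay n m (g : 'I_n -> 'I_m) (A : lset n) : lset m :=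
  @LSet m (ls_car A) (fun x => g (ls_lay A x)).
Lemma ls_relay_lay n m (g : 'I_n -> 'I_m) (A B : lset n) (h : lsiso A B) x :
  ls_lay (ls_relay g B) (si_f h x) = ls_lay (ls_relay g A) x.
Proof. by rewrite /= si_lay. Qed.
Definition ls_relayF n m (g : 'I_n -> 'I_m) : sfun n m :=
  @SFun n m (ls_relay g) (fun A B h =>
    @LSIso m (ls_relay g A) (ls_relay g B) (si_f h) (si_g h) (si_fK h) (si_gK h)
      (ls_relay_lay g h)).

Section PRelay.
Variables (n m : nat) (g : 'I_n -> 'I_m).
Hypothesis gmono : forall x y : 'I_n, x <= y -> g x <= g y.
Lemma lp_relay_mono (P : lposet n) x y :
  lp_le P x y -> g (lp_lay P x) <= g (lp_lay P y).
Proof. by move=> /lp_mono; apply: gmono. Qed.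
Definition lp_relay (P : lposet n) : lposet m :=
  @LPoset m (lp_car P) (lp_le P) (@lp_refl n P) (@lp_anti n P) (@lp_trans n P)
    (fun x => g (lp_lay P x)) (@lp_relay_mono P).
Lemma lp_relay_lay (P Q : lposet n) (h : lpiso P Q) x :
  lp_lay (lp_relay Q) (pi_f h x) = lp_lay (lp_relay P) x.
Proof. by rewrite /= pi_lay. Qed.
Definition lp_relayF : pfun n m :=
  @PFun n m lp_relay (fun P Q h =>
    @LPIso m (lp_relay P) (lp_relay Q) (pi_f h) (pi_g h) (pi_fK h) (pi_gK h)
      (pi_le h) (lp_relay_lay h)).
End PRelay.

(* Restriction to the layers lo+1, ..., lo+m (0-based: lo <= layer < lo+m),
   renumbered as 1..m (deleting outer layers). *)
Lemma rng_lt lo m (a : nat) : (lo <= a) && (a < lo + m) -> a - lo < m.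
Proof. by case/andP=> h1 h2; rewrite ltn_subLR. Qed.

Section SRestr.
Variables (n lo m : nat).
Definition ls_rng (A : lset n) : pred (ls_car A) :=
  fun x => (lo <= ls_lay A x) && (ls_lay A x < lo + m).
Arguments ls_rng A x : clear implicits.
Definition ls_restr (A : lset n) : lset m :=
  @LSet m {x : ls_car A | ls_rng A x}
    (fun x => Ordinal (rng_lt (valP x))).
Lemma ls_rng_f (A B : lset n) (h : lsiso A B) x :
  ls_rng A x -> ls_rng B (si_f h x).
Proof. by rewrite /ls_rng si_lay. Qed.
Lemma ls_rng_g (A B : lset n) (h : lsiso A B) y :
  ls_rng B y -> ls_rng A (si_g h y).
Proof. by rewrite /ls_rng -(si_lay h (si_g h y)) si_gK. Qed.
Section Hom.
Variables (A B : lset n) (h : lsiso A B).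
Definition ls_restr_f (x : ls_car (ls_restr A)) : ls_car (ls_restr B) :=
  exist _ (si_f h (val x)) (ls_rng_f h (valP x)).
Definition ls_restr_g (y : ls_car (ls_restr B)) : ls_car (ls_restr A) :=
  exist _ (si_g h (val y)) (ls_rng_g h (valP y)).
Lemma ls_restr_fK : cancel ls_restr_f ls_restr_g.
Proof. by move=> x; apply: val_inj; rewrite /= si_fK. Qed.
Lemma ls_restr_gK : cancel ls_restr_g ls_restr_f.
Proof. by move=> x; apply: val_inj; rewrite /= si_gK. Qed.
Lemma ls_restr_lay x : ls_lay (ls_restr B) (ls_restr_f x) = ls_lay (ls_restr A) x.
Proof. by apply: val_inj; rewrite /= si_lay. Qed.
Definition ls_restr_hom : lsiso (ls_restr A) (ls_restr B) :=
  LSIso ls_restr_fK ls_restr_gK ls_restr_lay.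
End Hom.
Definition ls_restrF : sfun n m := @SFun n m ls_restr ls_restr_hom.
End SRestr.

Section PRestr.
Variables (n lo m : nat).
Definition lp_rng (P : lposet n) : pred (lp_car P) :=
  fun x => (lo <= lp_lay P x) && (lp_lay P x < lo + m).
Arguments lp_rng P x : clear implicits.
Section Obj.
Variable P : lposet n.
Definition lpr_T : finType := {x : lp_car P | lp_rng P x}.
Definition lpr_le : rel lpr_T := fun x y => lp_le P (val x) (val y).
Lemma lpr_refl : reflexive lpr_le.
Proof. by move=> x; apply: lp_refl. Qed.
Lemma lpr_anti : antisymmetric lpr_le.
Proof. by move=> x y h; apply: val_inj; apply: (@lp_anti n P). Qed.
Lemma lpr_trans : transitive lpr_le.
Proof. by move=> x y z; apply: lp_trans. Qed.
Definition lpr_lay (x : lpr_T) : 'I_m := Ordinal (rng_lt (valP x)).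
Lemma lpr_mono x y : lpr_le x y -> lpr_lay x <= lpr_lay y.
Proof. by move=> /lp_mono h; rewrite /= leq_sub2r. Qed.
Definition lp_restr : lposet m :=
  @LPoset m lpr_T lpr_le lpr_refl lpr_anti lpr_trans lpr_lay lpr_mono.
End Obj.
Lemma lp_rng_f (P Q : lposet n) (h : lpiso P Q) x :
  lp_rng P x -> lp_rng Q (pi_f h x).
Proof. by rewrite /lp_rng pi_lay. Qed.
Lemma lp_rng_g (P Q : lposet n) (h : lpiso P Q) y :
  lp_rng Q y -> lp_rng P (pi_g h y).
Proof. by rewrite /lp_rng -(pi_lay h (pi_g h y)) pi_gK. Qed.
Section Hom.
Variables (P Q : lposet n) (h : lpiso P Q).
Definition lp_restr_f (x : lp_car (lp_restr P)) : lp_car (lp_restr Q) :=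
  exist _ (pi_f h (val x)) (lp_rng_f h (valP x)).
Definition lp_restr_g (y : lp_car (lp_restr Q)) : lp_car (lp_restr P) :=
  exist _ (pi_g h (val y)) (lp_rng_g h (valP y)).
Lemma lp_restr_fK : cancel lp_restr_f lp_restr_g.
Proof. by move=> x; apply: val_inj; rewrite /= pi_fK. Qed.
Lemma lp_restr_gK : cancel lp_restr_g lp_restr_f.
Proof. by move=> x; apply: val_inj; rewrite /= pi_gK. Qed.
Lemma lp_restr_le x y :
  lp_le (lp_restr Q) (lp_restr_f x) (lp_restr_f y) = lp_le (lp_restr P) x y.
Proof. by rewrite /= /lpr_le /= pi_le. Qed.
Lemma lp_restr_lay x : lp_lay (lp_restr Q) (lp_restr_f x) = lp_lay (lp_restr P) x.
Proof. by apply: val_inj; rewrite /= pi_lay. Qed.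
Definition lp_restr_hom : lpiso (lp_restr P) (lp_restr Q) :=
  LPIso lp_restr_fK lp_restr_gK lp_restr_le lp_restr_lay.
End Hom.
Definition lp_restrF : pfun n m := @PFun n m lp_restr lp_restr_hom.
End PRestr.

(* Maps of layers.
   joinmap n k : {1..n+2} -> {1..n+1} joins the layers k and k+1 (1-based),
     i.e. 0-based t |-> t if t < k, t-1 otherwise (used for 1 <= k <= n+1;
     the clamp by minn is only there to make the map total and is inactive
     in that range).
   skipmap n k : {1..n} -> {1..n+1} inserts an empty layer at 0-based
     position k (0 <= k <= n). *)
Lemma joinmap_lt n (k t : nat) : minn (if t < k then t else t.-1) n < n.+1.
Proof. exact: leq_ltn_trans (geq_minr _ _) (ltnSn n). Qed.
Definition joinmap n k (t : 'I_n.+2) : 'I_n.+1 := Ordinal (joinmap_lt n k t).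
Arguments joinmap : clear implicits.
Lemma joinmap_mono n k (x y : 'I_n.+2) : x <= y -> joinmap n k x <= joinmap n k y.
Proof.
move=> xy /=; rewrite leq_min geq_minr andbT; apply: leq_trans (geq_minl _ _) _.
rewrite -!subn1; case: ifP => hx; case: ifP => hy; lia.
Qed.
Lemma skipmap_lt n (k : nat) (t : 'I_n) : (if t < k then (t : nat) else t.+1) < n.+1.
Proof. by case: ifP => _; [apply: ltnW | ]; rewrite ltnS ?ltn_ord // ltnW. Qed.
Definition skipmap n k (t : 'I_n) : 'I_n.+1 := Ordinal (skipmap_lt k t).
Arguments skipmap : clear implicits.
Lemma skipmap_mono n k (x y : 'I_n) : x <= y -> skipmap n k x <= skipmap n k y.
Proof.
move=> xy /=; case: ifP => hx; case: ifP => hy; lia.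
Qed.

(* Xface n k = d_k : I_{n+1} -> I_n (0 <= k <= n+1):
     d_0 deletes the first layer, d_{n+1} deletes the last layer,
     inner d_k (1 <= k <= n) joins the layers k and k+1.
   Xdeg n k = s_k : I_n -> I_{n+1} (0 <= k <= n) inserts an empty layer
     (as layer k+1).  Same for C (Yface, Ydeg). *)
Definition Xface (n k : nat) : sfun n.+1 n :=
  match n return sfun n.+1 n with
  | 0 => if k == 0 then ls_restrF 1 1 0 else ls_restrF 1 0 0
  | n'.+1 =>
      if k == 0 then ls_restrF n'.+2 1 n'.+1
      else if k == n'.+2 then ls_restrF n'.+2 0 n'.+1
      else ls_relayF (joinmap n' k)
  end.
Definition Xdeg (n k : nat) : sfun n n.+1 := ls_relayF (skipmap n k).

Definition Yface (n k : nat) : pfun n.+1 n :=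
  match n return pfun n.+1 n with
  | 0 => if k == 0 then lp_restrF 1 1 0 else lp_restrF 1 0 0
  | n'.+1 =>
      if k == 0 then lp_restrF n'.+2 1 n'.+1
      else if k == n'.+2 then lp_restrF n'.+2 0 n'.+1
      else lp_relayF (@joinmap_mono n' k)
  end.
Definition Ydeg (n k : nat) : pfun n n.+1 := lp_relayF (@skipmap_mono n k).

(* The groupoids I_i x C_n, with B_{i,j} = bobj i (j+1),
   B_{i,-1} = bobj i 0, B_{-1,j} = bobj 0 j. *)
Definition bobj (i n : nat) := (lset i * lposet n)%type.
Definition bhom i n (x y : bobj i n) := (lsiso x.1 y.1 * lpiso x.2 y.2)%type.
Definition bid i n (x : bobj i n) : bhom x x := (lsid x.1, lpid x.2).
Definition bcomp i n (x y z : bobj i n) (g : bhom y z) (h : bhom x y) : bhom x z :=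
  (lscomp g.1 h.1, lpcomp g.2 h.2).
(* equality of morphisms (isomorphisms are determined by their underlying
   bijections) *)
Definition bheq i n (x y : bobj i n) (h h' : bhom x y) : Prop :=
  (forall s, si_f h.1 s = si_f h'.1 s) /\ (forall p, pi_f h.2 p = pi_f h'.2 p).

Record bfun i n i' n' := BFun {
  bf_ob :> bobj i n -> bobj i' n';
  bf_hom : forall x y : bobj i n, bhom x y -> bhom (bf_ob x) (bf_ob y) }.
Arguments bf_hom {i n i' n'} _ {x y} _.

Definition is_functor i n i' n' (F : bfun i n i' n') : Prop :=
  [/\ (forall x, bheq (bf_hom F (bid x)) (bid (F x))),
      (forall x y z (g : bhom y z) (h : bhom x y),
        bheq (bf_hom F (bcomp g h)) (bcomp (bf_hom F g) (bf_hom F h))) &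
      (forall x y (h h' : bhom x y), bheq h h' -> bheq (bf_hom F h) (bf_hom F h'))].

Definition bidF i n : bfun i n i n := @BFun i n i n id (fun _ _ h => h).
Definition bcompF i n i' n' i'' n'' (G : bfun i' n' i'' n'') (F : bfun i n i' n')
  : bfun i n i'' n'' :=
  @BFun i n i'' n'' (fun x => G (F x)) (fun x y h => bf_hom G (bf_hom F h)).
Definition prodF i n i' n' (F : sfun i i') (G : pfun n n') : bfun i n i' n' :=
  @BFun i n i' n' (fun x => (sf_ob F x.1, pf_ob G x.2))
    (fun x y h => (sf_hom F h.1, pf_hom G h.2)).

(* F = G as maps of groupoids, read as: F and G are naturally isomorphic *)
Definition natiso i n i' n' (F G : bfun i n i' n') : Prop :=
  exists eta : forall x, bhom (F x) (G x),
    forall x y (h : bhom x y),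
      bheq (bcomp (bf_hom G h) (eta x)) (bcomp (eta y) (bf_hom F h)).

(* horizontal d_k : B_{i,j+1} -> B_{i,j}   (= id x d_{k+1}),  0 <= k <= j+1 *)
Definition Bhf i j k : bfun i j.+2 i j.+1 := prodF (idS i) (Yface j.+1 k.+1).
(* horizontal s_k : B_{i,j} -> B_{i,j+1}   (= id x s_{k+1}),  0 <= k <= j *)
Definition Bhs i j k : bfun i j.+1 i j.+2 := prodF (idS i) (Ydeg j.+1 k.+1).
(* vertical e_k : B_{i+1,j} -> B_{i,j}     (= d_k x id),      0 <= k <= i+1 *)
Definition Bvf i j k : bfun i.+1 j.+1 i j.+1 := prodF (Xface i k) (idP j.+1).
(* vertical t_k : B_{i,j} -> B_{i+1,j}     (= s_k x id),      0 <= k <= i *)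
Definition Bvs i j k : bfun i j.+1 i.+1 j.+1 := prodF (Xdeg i k) (idP j.+1).
(* augmentation u = id x d_1 : B_{i,0} -> B_{i,-1} *)
Definition Bu i : bfun i 1 i 0 := prodF (idS i) (Yface 0 1).
(* augmentation v = id x d_0 : B_{0,j} -> B_{-1,j} *)
Definition Bv j : bfun 0 j.+1 0 j := prodF (idS 0) (Yface j 0).
(* vertical face e_k on the augmentation row: B_{i+1,-1} -> B_{i,-1} *)
Definition Bvf_aug i k : bfun i.+1 0 i 0 := prodF (Xface i k) (idP 0).
(* horizontal face d_k on the augmentation column B_{-1,.} = X_0 x Y:
   B_{-1,j+1} -> B_{-1,j} *)
Definition Bhf_aug j k : bfun 0 j.+1 0 j := prodF (idS 0) (Yface j k).

Section Abacus.
Variables (i j : nat).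

(* the moved layer a^{-1}(i+1) (0-based layer i) *)
Definition toplayer (A : lset i.+1) : pred (ls_car A) :=
  fun s => (ls_lay A s : nat) == i.
Arguments toplayer A s : clear implicits.

Section Obj.
Variables (A : lset i.+1) (P : lposet j.+1).
Definition mv_T : finType := ({s : ls_car A | toplayer A s} + lp_car P)%type.
Definition mv_le : rel mv_T := fun x y =>
  match x, y with
  | inl a, inl b => a == b
  | inr p, inr q => lp_le P p q
  | _, _ => false
  end.
Lemma mv_refl : reflexive mv_le.
Proof. by case=> [a|p] /=; rewrite ?eqxx ?lp_refl. Qed.
Lemma mv_anti : antisymmetric mv_le.
Proof.
case=> [a|p] [b|q] //=; first by case/andP=> /eqP->.
by move=> h; rewrite (@lp_anti _ P p q h).
Qed.
Lemma mv_trans : transitive mv_le.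
Proof.
case=> [a|p] [b|q] [c|r] //=; first by move=> /eqP-> /eqP->.
exact: lp_trans.
Qed.
Definition mv_lay (x : mv_T) : 'I_j.+2 :=
  match x with inl _ => ord0 | inr p => lift ord0 (lp_lay P p) end.
Lemma mv_mono x y : mv_le x y -> mv_lay x <= mv_lay y.
Proof. by case: x y => [a|p] [b|q] //= /lp_mono. Qed.
Definition mv_poset : lposet j.+2 :=
  @LPoset j.+2 mv_T mv_le mv_refl mv_anti mv_trans mv_lay mv_mono.
End Obj.

Section Hom.
Variables (A B : lset i.+1) (P Q : lposet j.+1) (h1 : lsiso A B) (h2 : lpiso P Q).
Lemma top_f s : toplayer A s -> toplayer B (si_f h1 s).
Proof. by rewrite /toplayer si_lay. Qed.
Lemma top_g s : toplayer B s -> toplayer A (si_g h1 s).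
Proof. by rewrite /toplayer -(si_lay h1 (si_g h1 s)) si_gK. Qed.
Definition mv_f (x : mv_T A P) : mv_T B Q :=
  match x with
  | inl a => inl (exist _ (si_f h1 (val a)) (top_f (valP a)))
  | inr p => inr (pi_f h2 p)
  end.
Definition mv_g (x : mv_T B Q) : mv_T A P :=
  match x with
  | inl a => inl (exist _ (si_g h1 (val a)) (top_g (valP a)))
  | inr p => inr (pi_g h2 p)
  end.
Lemma mv_fK : cancel mv_f mv_g.
Proof.
by case=> [a|p] /=; [congr inl; apply: val_inj; rewrite /= si_fK | rewrite pi_fK].
Qed.
Lemma mv_gK : cancel mv_g mv_f.
Proof.
by case=> [a|p] /=; [congr inl; apply: val_inj; rewrite /= si_gK | rewrite pi_gK].
Qed.
Lemma mv_f_le x y : lp_le (mv_poset B Q) (mv_f x) (mv_f y) = lp_le (mv_poset A P) x y.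
Proof.
case: x y => [a|p] [b|q] //=; last exact: pi_le.
apply/eqP/eqP => [[]|-> //]; move/(can_inj (si_fK h1)) => e.
by apply: val_inj.
Qed.
Lemma mv_f_lay x : lp_lay (mv_poset B Q) (mv_f x) = lp_lay (mv_poset A P) x.
Proof. by case: x => [a|p] //=; rewrite pi_lay. Qed.
Definition mv_hom : lpiso (mv_poset A P) (mv_poset B Q) :=
  @LPIso j.+2 (mv_poset A P) (mv_poset B Q) mv_f mv_g mv_fK mv_gK mv_f_le mv_f_lay.
End Hom.

Definition abacus_f : bfun i.+1 j.+1 i j.+2 :=
  @BFun i.+1 j.+1 i j.+2
    (fun x => (@ls_restr i.+1 0 i x.1, mv_poset x.1 x.2))
    (fun x y h => (ls_restr_hom 0 i h.1, mv_hom h.1 h.2)).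
End Abacus.

Definition is_abacus_map (f : forall i j, bfun i.+1 j.+1 i j.+2) : Prop :=
  [/\
      (forall i j, is_functor (f i j)),
      (* f_{i,.} : B_{i+1,.} -> Dec_bot(B_{i,.}) is simplicial *)
      (forall i j k, k <= j.+1 ->
         natiso (bcompF (Bhf i j.+1 k.+1) (f i j.+1))
                (bcompF (f i j) (Bhf i.+1 j k))) /\
      (forall i j k, k <= j ->
         natiso (bcompF (Bhs i j.+1 k.+1) (f i j))
                (bcompF (f i j.+1) (Bhs i.+1 j k))),
      (* f_{.,j} : Dec_top(B_{.,j}) -> B_{.,j+1} commutes with all structure
         maps except the top face maps *)
      (forall i j k, k <= i ->
         natiso (bcompF (Bvf i j.+1 k) (f i.+1 j))
                (bcompF (f i j) (Bvf i.+1 j k))) /\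
      (forall i j k, k <= i ->
         natiso (bcompF (Bvs i j.+1 k) (f i j))
                (bcompF (f i.+1 j) (Bvs i.+1 j k))) &
      (forall i j, natiso (bcompF (Bhf i j 0) (bcompF (f i j) (Bvs i j i)))
                          (bidF i j.+1))].

Definition is_augmented_abacus_map (f : forall i j, bfun i.+1 j.+1 i j.+2) : Prop :=
  is_abacus_map f /\
  exists (fa : forall i, bfun i.+1 0 i 1) (fb : forall j, bfun 0 j.+1 0 j.+1),
    [/\ (* f_{i,-1} : B_{i+1,-1} -> B_{i,0} and f_{-1,j} : B_{0,j} -> B_{-1,j+1}
           are maps of groupoids *)
        (forall i, is_functor (fa i)) /\ (forall j, is_functor (fb j)),
        (forall i, natiso (bcompF (fa i) (Bu i.+1)) (bcompF (Bhf i 0 1) (f i 0))),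
        (forall i, natiso (bcompF (Bu i) (fa i)) (Bvf_aug i i.+1)),
        (forall j, natiso (bcompF (fb j) (Bvf 0 j 0)) (bcompF (Bv j.+1) (f 0 j))) &
        (forall j, natiso (bcompF (Bhf_aug j 0) (fb j)) (Bv j))].

(* Every identity required
   of an augmented abacus map then holds up to a natural isomorphism that is the
   identity on underlying elements, because both sides are built from the same
   elements and give them the same layers: the maps e_k, t_k (k <= i) of I never
   touch the last layer, those of Dec_bot C never touch the first layer of the
   poset, and in d_0 f_{i,j} t_i the moved layer is empty.  What remains is to
   match the different subtypes in which the two sides package these elements. *)
From HB Require Import structures.
From mathcomp Require Import all_boot zify.
Set Implicit Arguments. Unset Strict Implicit. Unset Printing Implicit Defensive.

Definition sig_cast (T : Type) (P Q : pred T) (PQ : forall x, P x -> Q x)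
    (x : {x | P x}) : {x | Q x} :=
  exist _ (val x) (PQ _ (valP x)).

Lemma sig_castK (T : Type) (P Q : pred T)
    (PQ : forall x, P x -> Q x) (QP : forall x, Q x -> P x) :
  cancel (sig_cast PQ) (sig_cast QP).
Proof. by case=> x Px; apply: val_inj. Qed.

Section SigFlat.
Variables (T : Type) (P Q R : pred T).
Variables (PQR : forall x, P x -> Q x -> R x)
  (RP : forall x, R x -> P x) (RQ : forall x, R x -> Q x).

Definition sig_flat (y : {y : {x | P x} | Q (val y)}) : {x | R x} :=
  exist _ (val (val y)) (PQR (valP (val y)) (valP y)).

Definition sig_nest (x : {x | R x}) : {y : {x | P x} | Q (val y)} :=
  exist (fun y => Q (val y)) (exist _ (val x) (RP (valP x))) (RQ (valP x)).

Lemma sig_flatK : cancel sig_flat sig_nest.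
Proof. by case=> [[x Px] Qx]; do 2 apply: val_inj. Qed.

Lemma sig_nestK : cancel sig_nest sig_flat.
Proof. by case=> x Rx; apply: val_inj. Qed.
End SigFlat.

Lemma ls_inv_lay n (A B : lset n) (h : lsiso A B) y :
  ls_lay A (si_g h y) = ls_lay B y.
Proof. by rewrite -(si_lay h) si_gK. Qed.

Definition ls_inv n (A B : lset n) (h : lsiso A B) : lsiso B A :=
  LSIso (si_gK h) (si_fK h) (ls_inv_lay h).

Lemma ord0_empty (t : 'I_0) : False. Proof. by case: t. Qed.

Section Empty.
Variables (A B : lset 0) (P Q : lposet 0).

Definition ls_iso0 : lsiso A B :=
  @LSIso 0 A B (fun x => False_rect _ (ord0_empty (ls_lay A x)))
    (fun y => False_rect _ (ord0_empty (ls_lay B y)))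
    (fun x => False_ind _ (ord0_empty (ls_lay A x)))
    (fun y => False_ind _ (ord0_empty (ls_lay B y)))
    (fun x => False_ind _ (ord0_empty (ls_lay A x))).

Definition lp_iso0 : lpiso P Q :=
  @LPIso 0 P Q (fun x => False_rect _ (ord0_empty (lp_lay P x)))
    (fun y => False_rect _ (ord0_empty (lp_lay Q y)))
    (fun x => False_ind _ (ord0_empty (lp_lay P x)))
    (fun y => False_ind _ (ord0_empty (lp_lay Q y)))
    (fun x _ => False_ind _ (ord0_empty (lp_lay P x)))
    (fun x => False_ind _ (ord0_empty (lp_lay P x))).
End Empty.

Section RestrRestr.
Variables (n lo m lo' m' : nat) (A : lset n).
Hypothesis inner : lo + m <= m'.

Let in_outer (x : ls_car A) := ls_rng lo' m' x.
Let in_inner (x : ls_car A) := (lo <= ls_lay A x - lo') && (ls_lay A x - lo' < lo + m).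
Let in_both (x : ls_car A) := ls_rng (lo' + lo) m x.

Lemma in_outer_inner_both x : in_outer x -> in_inner x -> in_both x.
Proof. by rewrite /in_outer /in_inner /in_both /ls_rng; lia. Qed.
Lemma in_both_outer x : in_both x -> in_outer x.
Proof. by rewrite /in_outer /in_both /ls_rng; lia. Qed.
Lemma in_both_inner x : in_both x -> in_inner x.
Proof. by rewrite /in_inner /in_both /ls_rng; lia. Qed.

Lemma ls_restr_restr_lay (y : ls_car (ls_restr lo m (ls_restr lo' m' A))) :
  ls_lay (ls_restr (lo' + lo) m A) (sig_flat in_outer_inner_both y) =
  ls_lay (ls_restr lo m (ls_restr lo' m' A)) y.
Proof. by apply: val_inj; rewrite /= subnDA. Qed.

Definition ls_restr_restr :
    lsiso (ls_restr lo m (ls_restr lo' m' A)) (ls_restr (lo' + lo) m A) :=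
  @LSIso m (ls_restr lo m (ls_restr lo' m' A)) (ls_restr (lo' + lo) m A) _ _
    (sig_flatK in_outer_inner_both in_both_outer in_both_inner)
    (sig_nestK in_outer_inner_both in_both_outer in_both_inner) ls_restr_restr_lay.
End RestrRestr.
Arguments ls_restr_restr {n} lo m lo' m' A inner.

Section RelayRestr.
Variables (n n' m m' : nat) (g : 'I_m -> 'I_m') (g' : 'I_n -> 'I_n') (A : lset n).
Hypothesis g'_rng : forall t : 'I_n, (t < m) = (g' t < m').
Hypothesis g_g' : forall (t : 'I_n) (u : 'I_m), t = u :> nat -> g u = g' t :> nat.

Lemma relay_rng_f x :
  ls_rng 0 m (A := A) x -> ls_rng 0 m' (A := ls_relay g' A) x.
Proof. by rewrite /ls_rng /= g'_rng. Qed.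
Lemma relay_rng_g x :
  ls_rng 0 m' (A := ls_relay g' A) x -> ls_rng 0 m (A := A) x.
Proof. by rewrite /ls_rng /= g'_rng. Qed.

Lemma ls_relay_restr_lay x :
  ls_lay (ls_restr 0 m' (ls_relay g' A)) (sig_cast relay_rng_f x) =
  ls_lay (ls_relay g (ls_restr 0 m A)) x.
Proof.
apply: val_inj => /=; rewrite subn0.
by apply/esym/g_g'; rewrite /= subn0.
Qed.

Definition ls_relay_restr :
    lsiso (ls_relay g (ls_restr 0 m A)) (ls_restr 0 m' (ls_relay g' A)) :=
  @LSIso m' (ls_relay g (ls_restr 0 m A)) (ls_restr 0 m' (ls_relay g' A)) _ _
    (sig_castK relay_rng_f relay_rng_g) (sig_castK relay_rng_g relay_rng_f)
    ls_relay_restr_lay.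
End RelayRestr.

Section RestrWiden.
Variables (n m : nat) (g : 'I_n -> 'I_m) (A : lset n).
Hypothesis g_val : forall t, g t = t :> nat.

Lemma widen_rng x : ls_rng 0 n (A := ls_relay g A) x.
Proof. by rewrite /ls_rng /= g_val. Qed.

Definition widen_in (x : ls_car A) : ls_car (ls_restr 0 n (ls_relay g A)) :=
  exist _ x (widen_rng x).

Lemma widen_inK : cancel val widen_in.
Proof. by move=> x; apply: val_inj. Qed.

Lemma ls_restr_widen_lay x :
  ls_lay A (val x) = ls_lay (ls_restr 0 n (ls_relay g A)) x.
Proof. by apply: val_inj; rewrite /= g_val subn0. Qed.

Definition ls_restr_widen : lsiso (ls_restr 0 n (ls_relay g A)) A :=
  @LSIso n (ls_restr 0 n (ls_relay g A)) A val widen_in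
    widen_inK (fun x => erefl) ls_restr_widen_lay.
End RestrWiden.

Lemma Xface_first n : Xface n 0 = ls_restrF n.+1 1 n.
Proof. by case: n. Qed.

Lemma Xface_last n : Xface n n.+1 = ls_restrF n.+1 0 n.
Proof. by case: n => //= n; rewrite eqxx. Qed.

Lemma Xface_inner n k : 0 < k <= n.+1 -> Xface n.+1 k = ls_relayF (joinmap n k).
Proof. by case: k => // k /= hk; rewrite ifN //; apply/eqP; lia. Qed.

Lemma Yface_last n : Yface n.+1 n.+2 = lp_restrF n.+2 0 n.+1.
Proof. by rewrite /= eqxx. Qed.

Lemma Yface_inner n k : 0 < k <= n.+1 -> Yface n.+1 k = lp_relayF (@joinmap_mono n k).
Proof. by case: k => // k /= hk; rewrite ifN //; apply/eqP; lia. Qed.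

Lemma skipmap0 n k : skipmap n.+1 k.+1 ord0 = ord0.
Proof. exact: val_inj. Qed.

Lemma skipmapS n k t : skipmap n.+1 k.+1 (lift ord0 t) = lift ord0 (skipmap n k t).
Proof. by apply: val_inj; rewrite /= /bump /= !add1n ltnS; case: ifP. Qed.

Lemma joinmap0 n k : joinmap n.+1 k.+1 ord0 = ord0.
Proof. by apply: val_inj; rewrite /= min0n. Qed.

Lemma joinmapS n k : 0 < k ->
  forall t, joinmap n.+1 k.+1 (lift ord0 t) = lift ord0 (joinmap n k t).
Proof. by move=> k0 t; apply: val_inj; rewrite /= /bump /= !add1n ltnS; case: ifP; lia. Qed.

Lemma eq_op_anti (T : eqType) : antisymmetric (@eq_op T).
Proof. by move=> x y /andP[/eqP]. Qed.

Definition discrete_poset (T : finType) : lposet 1 :=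
  @LPoset 1 T eq_op (@eqxx T) (@eq_op_anti T) (@eq_op_trans T)
    (fun _ => ord0) (fun _ _ _ => leqnn 0).

Section DiscreteHom.
Variables (T U : finType) (f : T -> U) (g : U -> T).
Hypotheses (fK : cancel f g) (gK : cancel g f).

Lemma discrete_le x y :
  lp_le (discrete_poset U) (f x) (f y) = lp_le (discrete_poset T) x y.
Proof. by rewrite /= (can_eq fK). Qed.

Definition discrete_hom : lpiso (discrete_poset T) (discrete_poset U) :=
  @LPIso 1 (discrete_poset T) (discrete_poset U) f g fK gK discrete_le
    (fun _ => erefl).
End DiscreteHom.

Definition ls_top i (A : lset i.+1) : finType := {s : ls_car A | toplayer s}.

Definition top_poset i (A : lset i.+1) : lposet 1 := discrete_poset (ls_top A).

Section TopHom.
Variables (i : nat) (A B : lset i.+1) (h : lsiso A B).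

Definition ls_top_f (s : ls_top A) : ls_top B := exist _ (si_f h (val s)) (top_f h (valP s)).
Definition ls_top_g (s : ls_top B) : ls_top A := exist _ (si_g h (val s)) (top_g h (valP s)).

Lemma ls_top_fK : cancel ls_top_f ls_top_g.
Proof. by move=> s; apply: val_inj; rewrite /= si_fK. Qed.
Lemma ls_top_gK : cancel ls_top_g ls_top_f.
Proof. by move=> s; apply: val_inj; rewrite /= si_gK. Qed.

Definition top_poset_hom : lpiso (top_poset A) (top_poset B) :=
  discrete_hom ls_top_fK ls_top_gK.
End TopHom.

Section MvTop.
Variables (i i' j : nat) (A : lset i.+1) (B : lset i'.+1) (P : lposet j.+1).
Variables (tf : ls_top A -> ls_top B) (tg : ls_top B -> ls_top A).
Hypotheses (tfK : cancel tf tg) (tgK : cancel tg tf).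

Definition mv_top_f (x : mv_T A P) : mv_T B P :=
  match x with inl a => inl (tf a) | inr p => inr p end.
Definition mv_top_g (x : mv_T B P) : mv_T A P :=
  match x with inl a => inl (tg a) | inr p => inr p end.

Lemma mv_top_fK : cancel mv_top_f mv_top_g.
Proof. by case=> [a|p] //=; rewrite tfK. Qed.
Lemma mv_top_gK : cancel mv_top_g mv_top_f.
Proof. by case=> [a|p] //=; rewrite tgK. Qed.
Lemma mv_top_le x y :
  lp_le (mv_poset B P) (mv_top_f x) (mv_top_f y) = lp_le (mv_poset A P) x y.
Proof. by case: x y => [a|p] [b|q] //=; rewrite (can_eq tfK). Qed.
Lemma mv_top_lay x : lp_lay (mv_poset B P) (mv_top_f x) = lp_lay (mv_poset A P) x.
Proof. by case: x. Qed.

Definition mv_top_iso : lpiso (mv_poset A P) (mv_poset B P) :=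
  @LPIso _ (mv_poset A P) (mv_poset B P) mv_top_f mv_top_g
    mv_top_fK mv_top_gK mv_top_le mv_top_lay.
End MvTop.

Section MvRelay.
Variables (i n m : nat) (g : 'I_n.+1 -> 'I_m.+1) (g' : 'I_n.+2 -> 'I_m.+2).
Variables (g_mono : forall x y : 'I_n.+1, x <= y -> g x <= g y)
  (g'_mono : forall x y : 'I_n.+2, x <= y -> g' x <= g' y).
Hypotheses (g'0 : g' ord0 = ord0)
  (g'S : forall t, g' (lift ord0 t) = lift ord0 (g t)).
Variables (A : lset i.+1) (P : lposet n.+1).

Lemma mv_relay_lay x :
  lp_lay (mv_poset A (lp_relay g_mono P)) x = lp_lay (lp_relay g'_mono (mv_poset A P)) x.
Proof. by case: x => [a|p] /=; rewrite ?g'0 ?g'S. Qed.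

Definition mv_relay :
    lpiso (lp_relay g'_mono (mv_poset A P)) (mv_poset A (lp_relay g_mono P)) :=
  @LPIso _ (lp_relay g'_mono (mv_poset A P)) (mv_poset A (lp_relay g_mono P)) id id
    (fun _ => erefl) (fun _ => erefl) (fun _ _ => erefl) mv_relay_lay.
End MvRelay.
Arguments mv_relay {i n m g g' g_mono g'_mono}.

Section MvRelayTop.
Variables (n m j : nat) (g : 'I_n.+1 -> 'I_m.+1) (A : lset n.+1) (P : lposet j.+1).
Hypothesis g_top : forall t : 'I_n.+1, (g t == m :> nat) = (t == n :> nat).

Lemma relay_top_f s : toplayer (A := A) s -> toplayer (A := ls_relay g A) s.
Proof. by rewrite /toplayer /= g_top. Qed.
Lemma relay_top_g s : toplayer (A := ls_relay g A) s -> toplayer (A := A) s.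
Proof. by rewrite /toplayer /= g_top. Qed.

Definition mv_relay_top : lpiso (mv_poset A P) (mv_poset (ls_relay g A) P) :=
  mv_top_iso P (sig_castK relay_top_f relay_top_g) (sig_castK relay_top_g relay_top_f).
End MvRelayTop.

Section MvRestrTop.
Variables (i j : nat) (A : lset i.+2) (P : lposet j.+1).

Let in_rng (s : ls_car A) := ls_rng 1 i.+1 s.
Let top_in_rng (s : ls_car A) := ls_lay A s - 1 == i.

Lemma restr_top_flat s : in_rng s -> top_in_rng s -> toplayer s.
Proof. by rewrite /in_rng /top_in_rng /ls_rng /toplayer; lia. Qed.
Lemma top_restr_rng s : toplayer s -> in_rng s.
Proof. by rewrite /in_rng /ls_rng /toplayer; lia. Qed.
Lemma top_restr_top s : toplayer s -> top_in_rng s.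
Proof. by rewrite /top_in_rng /toplayer; lia. Qed.

Definition mv_restr_top : lpiso (mv_poset A P) (mv_poset (ls_restr 1 i.+1 A) P) :=
  @mv_top_iso _ _ _ A (ls_restr 1 i.+1 A) P _ _
    (sig_nestK restr_top_flat top_restr_rng top_restr_top)
    (sig_flatK restr_top_flat top_restr_rng top_restr_top).
End MvRestrTop.

Section MvRestrBelast.
Variables (i j : nat) (A : lset i.+1) (P : lposet j.+2).

Lemma mv_rng_belast p :
  lp_rng 0 j.+2 (P := mv_poset A P) (inr p) = lp_rng 0 j.+1 (P := P) p.
Proof. by rewrite /lp_rng /= /bump /= add1n ltnS. Qed.

Definition mv_restr_belast_f (x : lp_car (lp_restr 0 j.+2 (mv_poset A P))) :
    lp_car (mv_poset A (lp_restr 0 j.+1 P)) :=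
  match val x as v return lp_rng 0 j.+2 (P := mv_poset A P) v -> _ with
  | inl a => fun _ => inl a
  | inr p => fun h => inr (exist _ p (etrans (esym (mv_rng_belast p)) h))
  end (valP x).

Definition mv_restr_belast_g (x : lp_car (mv_poset A (lp_restr 0 j.+1 P))) :
    lp_car (lp_restr 0 j.+2 (mv_poset A P)) :=
  match x with
  | inl a => exist _ (inl a) isT
  | inr q => exist _ (inr (val q)) (etrans (mv_rng_belast (val q)) (valP q))
  end.

Lemma mv_restr_belast_fK : cancel mv_restr_belast_f mv_restr_belast_g.
Proof. by case=> [[a|p] h]; apply: val_inj. Qed.
Lemma mv_restr_belast_gK : cancel mv_restr_belast_g mv_restr_belast_f.
Proof. by case=> [a|[p h]] //=; congr inr; apply: val_inj. Qed.
Lemma mv_restr_belast_le x y :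
  lp_le (mv_poset A (lp_restr 0 j.+1 P)) (mv_restr_belast_f x) (mv_restr_belast_f y) =
  lp_le (lp_restr 0 j.+2 (mv_poset A P)) x y.
Proof. by case: x y => [[a|p] h] [[b|q] h']. Qed.
Lemma mv_restr_belast_lay x :
  lp_lay (mv_poset A (lp_restr 0 j.+1 P)) (mv_restr_belast_f x) =
  lp_lay (lp_restr 0 j.+2 (mv_poset A P)) x.
Proof. by apply: val_inj; case: x => [[a|p] h] //=; rewrite /bump /= !subn0. Qed.

Definition mv_restr_belast :
    lpiso (lp_restr 0 j.+2 (mv_poset A P)) (mv_poset A (lp_restr 0 j.+1 P)) :=
  LPIso mv_restr_belast_fK mv_restr_belast_gK mv_restr_belast_le mv_restr_belast_lay.
End MvRestrBelast.

Section MvRestrHead.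
Variables (i j : nat) (A : lset i.+1) (P : lposet j.+1).

Definition mv_restr_head_f (s : lp_car (top_poset A)) :
    lp_car (lp_restr 0 1 (mv_poset A P)) :=
  exist _ (inl s) isT.

Definition mv_restr_head_g (x : lp_car (lp_restr 0 1 (mv_poset A P))) :
    lp_car (top_poset A) :=
  match val x as v return lp_rng 0 1 (P := mv_poset A P) v -> _ with
  | inl s => fun _ => s
  | inr p => fun h => False_rect _ (notF h)
  end (valP x).

Lemma mv_restr_head_fK : cancel mv_restr_head_f mv_restr_head_g.
Proof. by []. Qed.
Lemma mv_restr_head_gK : cancel mv_restr_head_g mv_restr_head_f.
Proof. by case=> [[s|p] h]; [apply: val_inj | case: (notF h)]. Qed.
Lemma mv_restr_head_le x y :
  lp_le (lp_restr 0 1 (mv_poset A P)) (mv_restr_head_f x) (mv_restr_head_f y) =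
  lp_le (top_poset A) x y.
Proof. by []. Qed.
Lemma mv_restr_head_lay x :
  lp_lay (lp_restr 0 1 (mv_poset A P)) (mv_restr_head_f x) = lp_lay (top_poset A) x.
Proof. exact: val_inj. Qed.

Definition mv_restr_head : lpiso (top_poset A) (lp_restr 0 1 (mv_poset A P)) :=
  LPIso mv_restr_head_fK mv_restr_head_gK mv_restr_head_le mv_restr_head_lay.
End MvRestrHead.

Section MvRestrBehead.
Variables (i j : nat) (A : lset i.+1) (P : lposet j.+1).

Lemma mv_rng_behead p : lp_rng 1 j.+1 (P := mv_poset A P) (inr p).
Proof. by rewrite /lp_rng /= /bump /=; have := ltn_ord (lp_lay P p); lia. Qed.

Definition mv_restr_behead_f (p : lp_car P) : lp_car (lp_restr 1 j.+1 (mv_poset A P)) :=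
  exist _ (inr p) (mv_rng_behead p).

Definition mv_restr_behead_g (x : lp_car (lp_restr 1 j.+1 (mv_poset A P))) : lp_car P :=
  match val x as v return lp_rng 1 j.+1 (P := mv_poset A P) v -> _ with
  | inl s => fun h => False_rect _ (notF h)
  | inr p => fun _ => p
  end (valP x).

Lemma mv_restr_behead_fK : cancel mv_restr_behead_f mv_restr_behead_g.
Proof. by []. Qed.
Lemma mv_restr_behead_gK : cancel mv_restr_behead_g mv_restr_behead_f.
Proof. by case=> [[s|p] h]; [case: (notF h) | apply: val_inj]. Qed.
Lemma mv_restr_behead_le x y :
  lp_le (lp_restr 1 j.+1 (mv_poset A P)) (mv_restr_behead_f x) (mv_restr_behead_f y) =
  lp_le P x y.
Proof. by []. Qed.
Lemma mv_restr_behead_lay x :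
  lp_lay (lp_restr 1 j.+1 (mv_poset A P)) (mv_restr_behead_f x) = lp_lay P x.
Proof. by apply: val_inj; rewrite /= /bump /= add1n subn1. Qed.

Definition mv_restr_behead : lpiso P (lp_restr 1 j.+1 (mv_poset A P)) :=
  LPIso mv_restr_behead_fK mv_restr_behead_gK mv_restr_behead_le mv_restr_behead_lay.
End MvRestrBehead.

Section MvJoinNoTop.
Variables (i j : nat) (A : lset i.+1) (P : lposet j.+1).
Hypothesis no_top : forall s : ls_car A, ~~ toplayer s.

Definition mv_join_f (x : lp_car (lp_relay (@joinmap_mono j 1) (mv_poset A P))) : lp_car P :=
  match x with
  | inl s => False_rect _ (negP (no_top (val s)) (valP s))
  | inr p => p
  end.

Lemma mv_join_fK : cancel mv_join_f inr.
Proof. by case=> [[s top_s]|p] //; case/negP: (no_top s). Qed.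
Lemma mv_join_le x y :
  lp_le P (mv_join_f x) (mv_join_f y) =
  lp_le (lp_relay (@joinmap_mono j 1) (mv_poset A P)) x y.
Proof.
case: x => [[s top_s]|p]; first by case/negP: (no_top s).
by case: y => [[s top_s]|q] //; case/negP: (no_top s).
Qed.
Lemma mv_join_lay x :
  lp_lay P (mv_join_f x) = lp_lay (lp_relay (@joinmap_mono j 1) (mv_poset A P)) x.
Proof.
case: x => [[s top_s]|p]; first by case/negP: (no_top s).
by apply: val_inj; rewrite /= /bump /=; have := ltn_ord (lp_lay P p); lia.
Qed.

Definition mv_join_no_top : lpiso (lp_relay (@joinmap_mono j 1) (mv_poset A P)) P :=
  @LPIso _ (lp_relay (@joinmap_mono j 1) (mv_poset A P)) P mv_join_f inr
    mv_join_fK (fun _ => erefl) mv_join_le mv_join_lay.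
End MvJoinNoTop.


Lemma abacus_f_functor i j : is_functor (abacus_f i j).
Proof.
split.
- by move=> x; split=> [s|[a|p]] //=; [apply: val_inj | congr inl; apply: val_inj].
- by move=> x y z g h; split=> [s|[a|p]] //=; [apply: val_inj | congr inl; apply: val_inj].
- move=> x y h h' [eq_h1 eq_h2]; split=> [s|[a|p]] /=.
  + by apply: val_inj; rewrite /= eq_h1.
  + by congr inl; apply: val_inj; rewrite /= eq_h1.
  + by rewrite eq_h2.
Qed.

Lemma abacus_f_hface i j k : k <= j.+1 ->
  natiso (bcompF (Bhf i j.+1 k.+1) (abacus_f i j.+1))
         (bcompF (abacus_f i j) (Bhf i.+1 j k)).
Proof.
rewrite leq_eqVlt => /orP[/eqP->|lt_kj]; rewrite /Bhf.
  rewrite !Yface_last; exists (fun x => (lsid _, mv_restr_belast x.1 x.2)).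
  by move=> x y h; split=> [s|[[a|p] hp]] //=; congr inr; apply: val_inj.
rewrite (@Yface_inner j.+1 k.+2) // (@Yface_inner j k.+1) //.
exists (fun x => (lsid _, mv_relay (joinmap0 j k.+1) (@joinmapS j k.+1 isT) x.1 x.2)).
by move=> x y h; split=> [s|[a|p]].
Qed.

Lemma abacus_f_hdeg i j k :
  natiso (bcompF (Bhs i j.+1 k.+1) (abacus_f i j))
         (bcompF (abacus_f i j.+1) (Bhs i.+1 j k)).
Proof.
exists (fun x => (lsid _, mv_relay (skipmap0 j.+1 k.+1) (@skipmapS j.+1 k.+1) x.1 x.2)).
by move=> x y h; split=> [s|[a|p]].
Qed.

Lemma abacus_f_vface_first i j :
  natiso (bcompF (Bvf i j.+1 0) (abacus_f i.+1 j))
         (bcompF (abacus_f i j) (Bvf i.+1 j 0)).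
Proof.
rewrite /Bvf !Xface_first.
exists (fun x => (lscomp (ls_inv (ls_restr_restr 0 i 1 i.+1 x.1 (leqnSn i)))
                        (ls_restr_restr 1 i 0 i.+1 x.1 (leqnn i.+1)),
                 mv_restr_top x.1 x.2)).
move=> x y h; split=> [[[a ha] ha']|[[a ha]|p]] //=.
  by do 2 apply: val_inj.
by congr inl; do 2 apply: val_inj.
Qed.

Lemma abacus_f_vface_inner i j k : 0 < k <= i.+1 ->
  natiso (bcompF (Bvf i.+1 j.+1 k) (abacus_f i.+2 j))
         (bcompF (abacus_f i.+1 j) (Bvf i.+2 j k)).
Proof.
move=> hk; rewrite /Bvf Xface_inner // Xface_inner; last lia.
have rng (t : 'I_i.+3) : (t < i.+2) = (joinmap i.+1 k t < i.+1).
  by have := ltn_ord t; rewrite /=; case: ifP; lia.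
have comm (t : 'I_i.+3) (u : 'I_i.+2) : t = u :> nat -> joinmap i k u = joinmap i.+1 k t :> nat.
  by have := ltn_ord u; rewrite /= => + ->; case: ifP; lia.
have top (t : 'I_i.+3) : (joinmap i.+1 k t == i.+1 :> nat) = (t == i.+2 :> nat).
  by have := ltn_ord t; rewrite /=; case: ifP; lia.
exists (fun x => (ls_relay_restr x.1 rng comm, mv_relay_top x.1 x.2 top)).
move=> x y h; split=> [[a ha]|[[a ha]|p]] //=; first exact: val_inj.
by congr inl; apply: val_inj.
Qed.

Lemma abacus_f_vface i j k : k <= i ->
  natiso (bcompF (Bvf i j.+1 k) (abacus_f i.+1 j))
         (bcompF (abacus_f i j) (Bvf i.+1 j k)).
Proof.
case: k => [_|k]; first exact: abacus_f_vface_first.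
by case: i => // i hk; apply: abacus_f_vface_inner.
Qed.

Lemma abacus_f_vdeg i j k : k <= i ->
  natiso (bcompF (Bvs i j.+1 k) (abacus_f i j))
         (bcompF (abacus_f i.+1 j) (Bvs i.+1 j k)).
Proof.
move=> hk.
have rng (t : 'I_i.+1) : (t < i) = (skipmap i.+1 k t < i.+1).
  by have := ltn_ord t; rewrite /=; case: ifP; lia.
have comm (t : 'I_i.+1) (u : 'I_i) : t = u :> nat -> skipmap i k u = skipmap i.+1 k t :> nat.
  by rewrite /= => ->.
have top (t : 'I_i.+1) : (skipmap i.+1 k t == i.+1 :> nat) = (t == i :> nat).
  by have := ltn_ord t; rewrite /=; case: ifP; lia.
exists (fun x => (ls_relay_restr x.1 rng comm, mv_relay_top x.1 x.2 top)).
move=> x y h; split=> [[a ha]|[[a ha]|p]] //=; first exact: val_inj.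
by congr inl; apply: val_inj.
Qed.

Lemma abacus_f_top_degeneracy i j :
  natiso (bcompF (Bhf i j 0) (bcompF (abacus_f i j) (Bvs i j i))) (bidF i j.+1).
Proof.
rewrite /Bhf Yface_inner //.
have skip_val (t : 'I_i) : skipmap i i t = t :> nat by rewrite /= ltn_ord.
have no_top (A : lset i) (s : ls_car (ls_relay (skipmap i i) A)) : ~~ toplayer s.
  by rewrite /toplayer; have := ltn_ord (ls_lay A s); rewrite /=; case: ifP; lia.
exists (fun x => (ls_restr_widen x.1 skip_val, mv_join_no_top x.2 (@no_top x.1))).
by move=> x y h; split=> [[a ha]|[[a ha]|p]] //=; case/negP: (no_top _ a).
Qed.

Definition abacus_f_aug i : bfun i.+1 0 i 1 :=
  @BFun i.+1 0 i 1 (fun x => (ls_restr 0 i x.1, top_poset x.1))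
    (fun x y h => (ls_restr_hom 0 i h.1, top_poset_hom h.1)).

Lemma abacus_f_aug_functor i : is_functor (abacus_f_aug i).
Proof.
split.
- by move=> x; split=> s; apply: val_inj.
- by move=> x y z g h; split=> s; apply: val_inj.
- by move=> x y h h' [eq_h1 _]; split=> s; apply: val_inj; rewrite /= eq_h1.
Qed.

Lemma abacus_f_aug_u i :
  natiso (bcompF (abacus_f_aug i) (Bu i.+1)) (bcompF (Bhf i 0 1) (abacus_f i 0)).
Proof.
exists (fun x => (lsid _, mv_restr_head x.1 x.2)).
by move=> x y h; split=> s //; apply: val_inj.
Qed.

Lemma u_abacus_f_aug i : natiso (bcompF (Bu i) (abacus_f_aug i)) (Bvf_aug i i.+1).
Proof.
rewrite /Bvf_aug Xface_last; exists (fun x => (lsid _, lp_iso0 _ _)).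
by move=> x y h; split=> s //; case: (ord0_empty (lp_lay _ s)).
Qed.

Lemma v_abacus_f j :
  natiso (bcompF (bidF 0 j.+1) (Bvf 0 j 0)) (bcompF (Bv j.+1) (abacus_f 0 j)).
Proof.
exists (fun x => (ls_iso0 _ _, mv_restr_behead x.1 x.2)).
move=> x y h; split=> s; last exact: val_inj.
by case: (ord0_empty (ls_lay _ s)).
Qed.

Theorem lemma2p12 : is_augmented_abacus_map abacus_f.
Proof.
split.
  split.
  - exact: abacus_f_functor.
  - by split; [exact: abacus_f_hface | move=> i j k _; exact: abacus_f_hdeg].
  - by split; [exact: abacus_f_vface | exact: abacus_f_vdeg].
  - exact: abacus_f_top_degeneracy.
exists abacus_f_aug, (fun j => bidF 0 j.+1); split.
- by split=> *; [exact: abacus_f_aug_functor | split].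
- exact: abacus_f_aug_u.
- exact: u_abacus_f_aug.
- exact: v_abacus_f.
- by move=> j; exists (fun x => bid _).
Qed.
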